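(* Consider the MSSN-MC-HC problem with costs $c_s>0$, $c_r>0$, and suppose $\frac{c_s}{c_r}\ge\overline{m}(\overline{m}+1)(h_{\max}-1)$ for some integer $\overline{m}$ with $1\le\overline{m}<m$, where $m=|Q|$. Then on every feasible instance, the approximation ratio of SmartSelect (cost of its output divided by the optimum cost) is at most $$\max\Big\{\epsilon+\frac{m}{\overline{m}},\ \frac{m}{2}\Big(1+\frac{1}{\overline{m}(\overline{m}+1)}\Big)\Big\},$$ where $\epsilon\in[0,1)$ is defined by $\lceil\frac{m}{\overline{m}+1}\rceil=\frac{m}{\overline{m}+1}+\epsilon$.
   Context: MSSN-MC-HC problem: given a finite undirected graph $G=(V,E)$ with $V=Q\cup R\cup B$ (pairwise disjoint; $Q$ = sources, $R$ = potential relay locations, $B$ = potential sink locations), costs $c_s$ per sink and $c_r$ per relay, and a positive integer $h_{\max}$, select $B'\subseteq B$, $R'\subseteq R$ such that in the subgraph induced by $Q\cup R'\cup B'$ every source has a path of at most $h_{\max}$ edges to some sink of $B'$ (a feasible solution), minimizing $c_s|B'|+c_r|R'|$. An instance is feasible if a feasible solution exists. SmartSelect algorithm: (1) If for some $b\in B$ every source has a path of at most $h_{\max}$ edges to $b$ in the subgraph induced by $Q\cup B$, output $(\{b\},\emptyset)$. (2) If some source has no path of at most $h_{\max}$ edges in $G$ to any sink, declare infeasible. (3) For each $b_i\in B$ let $Q_i$ be the set of sources whose shortest path to $b_i$ in $G$ has at most $h_{\max}$ edges, and $R_i$ the set of relays whose shortest path to $b_i$ has at most $h_{\max}-1$ edges.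 (4) Greedy phase, iterations $j=0,1,\dots$: $B^{(0)}=B$, $Q_i^{(0)}=Q_i$; $B^{(j)}$ is the set of sinks not yet picked and $Q_i^{(j)}$ the set of sources of $Q_i$ not yet covered. In iteration $j$, for each $b_i\in B^{(j)}$, a relay-selection subroutine (e.g. the SPTiRP algorithm) applied to the subgraph of $G$ induced by $Q_i^{(j)}\cup R_i\cup\{b_i\}$ returns a set $\hat R_i^{(j)}\subseteq R_i$ consisting of the relays on one chosen path of at most $h_{\max}$ edges from each source of $Q_i^{(j)}$ to $b_i$. Let $n_i^{(j)}$ be the number of relays in $\hat R_i^{(j)}$ not selected in earlier iterations (earlier-selected relays have cost zero thereafter), and $C_i^{(j)}=\frac{c_s+c_r n_i^{(j)}}{|Q_i^{(j)}|}$. The sink $b_i$ with least $C_i^{(j)}$ is picked (ties broken in favor of larger $|Q_i^{(j)}|$), its sources $Q_i^{(j)}$ become covered and the relays $\hat R_i^{(j)}$ are selected. Stop when all sources are covered; output the picked sinks and selected relays. *)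

From HB Require Import structures.
From mathcomp Require Import all_boot all_order all_algebra.
Set Implicit Arguments. Unset Strict Implicit. Unset Printing Implicit Defensive.
Import Order.TTheory GRing.Theory Num.Theory.
Local Open Scope ring_scope.

Section MSSN.
Variable V : finType.
Variable e : rel V.
Variable h : nat.

Definition reach_in (S : {set V}) (k : nat) (x y : V) : bool :=
  [exists n : 'I_k.+1, [exists t : n.-tuple V,
     let p := val t in
     [&& path e x p, last x p == y, uniq (x :: p)
       & all (fun v => v \in S) (x :: p)]]].

Definition feasible_sol (Q R B B' R' : {set V}) : Prop :=
  [/\ B' \subset B, R' \subset R &
      forall q, q \in Q -> exists2 b, b \in B' & reach_in (Q :|: R' :|: B') h q b].

Definition feasible_instance (Q R B : {set V}) : Prop :=
  exists B' R', feasible_sol Q R B B' R'.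

(* Q_i and R_i of step (3) for sink b (shortest paths in G). *)
Definition Qset (Q : {set V}) (b : V) : {set V} :=
  [set q in Q | reach_in setT h q b ].
Definition Rset (R : {set V}) (b : V) : {set V} :=
  [set r in R | reach_in setT h.-1 r b ].

(* Rhat is a possible output of the relay-selection subroutine on the subgraph
   induced by Qj :|: Ri :|: [set b]: the relays on one chosen path of at most
   h edges from each source of Qj to b. *)
Definition valid_relays (Qj Ri : {set V}) (b : V) (Rhat : {set V}) : Prop :=
  exists f : V -> seq V,
    (forall q, q \in Qj ->
       [&& path e q (f q), last q (f q) == b, uniq (q :: f q),
           all (fun v => v \in Qj :|: Ri :|: [set b]) (q :: f q)
         & (size (f q) <= h)%N]) /\
    Rhat = [set r in Ri | [exists q in Qj, r \in f q]].

(* State of the greedy phase: (picked sinks, selected relays, covered sources). *)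
Definition gstate := ({set V} * {set V} * {set V})%type.

Section Greedy.
Variable K : archiRealFieldType.
Variables (cs cr : K) (Q R B : {set V}).

Definition Qj (C : {set V}) (b : V) : {set V} := Qset Q b :\: C.

Definition candidate (P C : {set V}) (b : V) : bool :=
  (b \in B :\: P) && (Qj C b != set0).

Definition Ccost (Sr C : {set V}) (b : V) (Rhat : {set V}) : K :=
  (cs + cr * #|Rhat :\: Sr|%:R) / #|Qj C b|%:R.

Definition greedy_step (st st' : gstate) : Prop :=
  let: (P, Sr, C) := st in
  exists (rho : V -> {set V}) (bs : V),
    [/\ forall b, candidate P C b -> valid_relays (Qj C b) (Rset R b) b (rho b),
        candidate P C bs,
        (forall b, candidate P C b ->
           Ccost Sr C bs (rho bs) < Ccost Sr C b (rho b) \/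
           (Ccost Sr C bs (rho bs) = Ccost Sr C b (rho b) /\
            (#|Qj C b| <= #|Qj C bs|)%N)) &
        st' = (bs |: P, Sr :|: rho bs, C :|: Qj C bs)].

Inductive greedy_reach : gstate -> gstate -> Prop :=
| gr_refl st : greedy_reach st st
| gr_step st st' st'' : greedy_step st st' -> greedy_reach st' st'' ->
                        greedy_reach st st''.

Definition step1_sink (b : V) : Prop :=
  b \in B /\ forall q, q \in Q -> reach_in (Q :|: B) h q b.

Definition step2_infeasible : Prop :=
  exists2 q, q \in Q & forall b, b \in B -> ~ reach_in setT h q b.

Definition smartselect_output (B' R' : {set V}) : Prop :=
  (exists b, step1_sink b /\ B' = [set b] /\ R' = set0) \/
  [/\ (forall b, ~ step1_sink b), ~ step2_infeasible &
      exists C, greedy_reach (set0, set0, set0) (B', R', C) /\ Q \subset C].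

Definition cost (B' R' : {set V}) : K := cs * #|B'|%:R + cr * #|R'|%:R.

End Greedy.
End MSSN.

Definition eps_of {K : archiRealFieldType} (m mb : nat) : K :=
  (Num.ceil (m%:R / (mb.+1)%:R : K))%:~R - m%:R / (mb.+1)%:R.

Definition ratio_bound {K : archiRealFieldType} (m mb : nat) : K :=
  Num.max (eps_of m mb + m%:R / mb%:R)
          (m%:R / 2 * (1 + 1 / (mb * mb.+1)%:R)).

(* Write m = |Q| and D = mb (mb + 1).  A path of at most h_max edges ends at a
   sink, so it carries at most h_max - 1 relays; hence every greedy iteration
   selects at most (h_max - 1) relays per newly covered source, and the
   hypothesis c_r (h_max - 1) <= c_s / D bounds the relay cost of SmartSelect
   by c_s m / D, while it picks at most m sinks.  An optimum with two or more
   sinks costs at least 2 c_s, which gives the factor (m/2)(1 + 1/D).  If the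
   optimum uses a single sink b*, then b* reaches every source, so in each
   iteration it is a candidate offering all u uncovered sources at price at
   most c_s / u + c_s / D.  The greedy choice, covering t sources, is at least
   as cheap, which forces t = u or t > mb.  So SmartSelect picks at most
   ceil (m / (mb + 1)) sinks and its cost is at most
   (ceil (m / (mb + 1)) + m / D) c_s = (eps + m / mb) c_s. *)

From HB Require Import structures.
From mathcomp Require Import all_boot all_order all_algebra.
From mathcomp Require Import zify ring lra.
Set Implicit Arguments. Unset Strict Implicit. Unset Printing Implicit Defensive.
Import Order.TTheory GRing.Theory Num.Theory.
Local Open Scope ring_scope.

Lemma card_bigcup_leq_sum {I T : finType} (P : pred I) (F : I -> {set T}) :
  (#|\bigcup_(i | P i) F i| <= \sum_(i | P i) #|F i|)%N.
Proof.
elim/big_rec2: _ => [|i n A _ IH]; first by rewrite cards0.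
by apply: leq_trans (leq_card_setU _ _) _; rewrite leq_add2l.
Qed.

Lemma card_path_interior {V : finType} (S : {set V}) (x b : V) (p : seq V) (k : nat) :
  b \notin S -> last x p = b -> (size p <= k)%N ->
  (#|[set r in S | r \in p]| <= k.-1)%N.
Proof.
move=> bNS; case/lastP: p => [|s y] /=.
  move=> _ _; rewrite (_ : [set r in S | _] = set0) ?cards0 //.
  by apply/setP => r; rewrite !inE andbF.
rewrite last_rcons size_rcons => yb sk.
apply: (@leq_trans #|[set r in s]|).
  apply: subset_leq_card; apply/subsetP => r; rewrite !inE mem_rcons inE yb.
  by case/andP=> rS /orP [/eqP rb|//]; move: bNS; rewrite -rb rS.
by rewrite cardsE; apply: leq_trans (card_size _) _; lia.
Qed.

Lemma card_valid_relays {V : finType} (e : rel V) (h : nat) (Qj Ri : {set V}) b Rhat :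
  b \notin Ri -> valid_relays e h Qj Ri b Rhat -> (#|Rhat| <= #|Qj| * h.-1)%N.
Proof.
move=> bNR [f [fP ->]].
have sub : [set r in Ri | [exists q in Qj, r \in f q]]
           \subset \bigcup_(q in Qj) [set r in Ri | r \in f q].
  apply/subsetP => r; rewrite inE => /andP [rR /exists_inP [q qQ rf]].
  by apply/bigcupP; exists q; rewrite // inE rR.
apply: leq_trans (subset_leq_card sub) _.
apply: leq_trans (card_bigcup_leq_sum _ _) _; rewrite -sum_nat_const.
apply: leq_sum => q /fP /and5P [_ /eqP qb _ _ qh].
exact: card_path_interior bNR qb qh.
Qed.

(* A sink serving [u] new
   sources costs at most [cs / u + cs / (mb (mb+1))] per source; when
   [t < u] and [t <= mb] this is at most [cs / t], because
   [1/t - 1/u >= 1/(t (t+1)) >= 1/(mb (mb+1))]. *)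
Lemma cheaper_pick_covers_enough {K : archiRealFieldType} (cs cr : K) (mb h t u ns nu : nat) :
  0 < cs -> 0 < cr -> cr * h.-1%:R <= cs / (mb * mb.+1)%:R ->
  (0 < t)%N -> (nu <= u * h.-1)%N ->
  (cs + cr * ns%:R) / t%:R < (cs + cr * nu%:R) / u%:R ->
  (u <= t)%N \/ (mb < t)%N.
Proof.
move=> cs0 cr0 crh t0 nuu cheaper.
have [ut|tu] := leqP u t; first by left.
have [mt|tm] := ltnP mb t; first by right.
exfalso; set D := (mb * mb.+1)%N in crh.
have u0 : (0 : K) < u%:R by rewrite ltr0n; lia.
have t0' : (0 : K) < t%:R by rewrite ltr0n.
have D0 : (0 : K) < D%:R by rewrite ltr0n /D; lia.
have lhs : cs / t%:R <= (cs + cr * ns%:R) / t%:R.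
  by rewrite ler_pM2r ?invr_gt0 // lerDl mulr_ge0 // ltW.
have rhs : (cs + cr * nu%:R) / u%:R <= cs / u%:R + cs / D%:R.
  rewrite mulrDl lerD2l; apply: le_trans crh.
  by rewrite ler_pdivrMr // -mulrA ler_pM2l // mulrC -natrM ler_nat.
have : cs / u%:R + cs / D%:R <= cs / t%:R.
  have -> : cs / u%:R + cs / D%:R
            = cs / t%:R + cs * ((t * D + t * u)%:R - (u * D)%:R) / (t * u * D)%:R.
    by rewrite !natrD !natrM; field; rewrite addrC natr1 !pnatr_eq0 -!lt0n; lia.
  rewrite gerDl mulr_le0_ge0 ?invr_ge0 ?ler0n // mulr_ge0_le0 ?(ltW cs0) //.
  by rewrite subr_le0 ler_nat /D; nia.
by move: (lt_le_trans (le_lt_trans lhs cheaper) rhs); rewrite leNgt => ->.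
Qed.

Lemma reach_in_setT {V : finType} (e : rel V) (S : {set V}) k x y :
  reach_in e S k x y -> reach_in e setT k x y.
Proof.
case/existsP => n /existsP [t /and4P [ex xy ux _]].
apply/existsP; exists n; apply/existsP; exists t.
by apply/and4P; split => //; apply/allP => v; rewrite inE.
Qed.

Lemma Qset_sole_sink {V : finType} (e : rel V) (h : nat) (Q S : {set V}) (b : V) :
  (forall q, q \in Q -> exists2 b', b' \in [set b] & reach_in e S h q b') ->
  Q \subset Qset e h Q b.
Proof.
move=> serves; apply/subsetP => q qQ; case: (serves q qQ) => b'.
by rewrite inE => /eqP -> /reach_in_setT qb; rewrite inE qQ qb.
Qed.

Lemma card_le_ceil_div {K : archiRealFieldType} (n d k : nat) :
  (0 < d)%N -> (d * k < n + d)%N -> k%:R <= (Num.ceil (n%:R / d%:R : K))%:~R :> K.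
Proof.
move=> d0 dk; have d0' : (0 : K) < d%:R by rewrite ltr0n.
have : (k%:Z - 1 < Num.ceil (n%:R / d%:R : K))%R.
  rewrite ceil_gt_int rmorphB /= rmorph1 ltr_pdivlMr //.
  by move: dk; rewrite -(@ltr_nat K) natrM natrD; lra.
by rewrite ltrBlDr ltzD1 -(@ler_int K).
Qed.

Lemma ratio_bound_ge_single {K : archiRealFieldType} (m mb : nat) : (0 < mb)%N ->
  (Num.ceil (m%:R / mb.+1%:R : K))%:~R + m%:R / (mb * mb.+1)%:R <= ratio_bound m mb :> K.
Proof.
move=> mb0; rewrite /ratio_bound le_max /eps_of; apply/orP; left.
rewrite le_eqVlt; apply/orP; left; apply/eqP; rewrite natrM; field.
by rewrite addrC natr1 !pnatr_eq0 -!lt0n mb0.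
Qed.

Lemma ratio_bound_ge_pair {K : archiRealFieldType} (m mb : nat) : (0 < mb)%N ->
  m%:R + m%:R / (mb * mb.+1)%:R <= ratio_bound m mb * 2 :> K.
Proof.
move=> mb0; have -> : m%:R + m%:R / (mb * mb.+1)%:R
                      = m%:R / 2 * (1 + 1 / (mb * mb.+1)%:R) * 2 :> K.
  by field; rewrite addrC natr1 !pnatr_eq0 -!lt0n mb0.
by rewrite ler_pM2r ?ltr0n // le_max lexx orbT.
Qed.

Lemma ratio_bound_ge1 {K : archiRealFieldType} (m mb : nat) :
  (0 < mb)%N -> (1 < m)%N -> 1 <= ratio_bound m mb :> K.
Proof.
move=> mb0 m1; rewrite -(ler_pM2r (_ : 0 < 2)) // mul1r.
apply: le_trans (@ratio_bound_ge_pair K m mb mb0).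
by apply: le_trans (_ : 2 <= m%:R) _; rewrite ?ler_nat ?lerDl ?divr_ge0.
Qed.

Section GreedyAnalysis.

Variables (K : archiRealFieldType) (V : finType) (e : rel V) (h : nat) (cs cr : K).
Variables (Q R B : {set V}).
Hypothesis disjoint_RB : [disjoint R & B].

Local Notation greedy_step := (greedy_step e h cs cr Q R B).
Local Notation greedy_reach := (greedy_reach e h cs cr Q R B).

Lemma greedy_reach_inv (I : gstate V -> Prop) st st' :
  (forall s s', I s -> greedy_step s s' -> I s') ->
  I st -> greedy_reach st st' -> I st'.
Proof.
move=> Istep + reach; elim: reach => // s s' s'' ss' _ IH Is.
exact/IH/(Istep _ _ Is ss').
Qed.

Lemma Qj_sub C b : Qj e h Q C b \subset Q :\: C.
Proof. by apply: setSD; apply/subsetP => q; rewrite inE => /andP []. Qed.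

Lemma card_setU_Qj C b : #|C :|: Qj e h Q C b| = (#|C| + #|Qj e h Q C b|)%N.
Proof. by rewrite cardsU /Qj setDE setICA setICr setI0 cards0 subn0. Qed.

Lemma sink_notin_Rset b : b \in B -> b \notin Rset e h R b.
Proof.
by move=> bB; rewrite inE negb_and (disjointFl disjoint_RB bB).
Qed.

Definition greedy_inv (st : gstate V) : Prop :=
  let: (P, Sr, C) := st in
  [/\ C \subset Q, (#|P| <= #|C|)%N, (#|Sr| <= #|C| * h.-1)%N &
      forall p, p \in P -> Qset e h Q p \subset C].

Lemma greedy_inv0 : greedy_inv (set0, set0, set0).
Proof. by split; rewrite ?cards0 ?sub0set // => p; rewrite inE. Qed.

Lemma greedy_inv_step st st' : greedy_inv st -> greedy_step st st' -> greedy_inv st'.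
Proof.
case: st => [[P Sr] C] [CQ PC SrC PQset] [rho [bs [valid cand _ ->]]].
have /andP [bsB _] := cand; move: bsB; rewrite inE => /andP [_ bsB].
have relays := card_valid_relays (sink_notin_Rset bsB) (valid _ cand).
rewrite /greedy_inv card_setU_Qj; split.
- by rewrite subUset CQ (subset_trans (Qj_sub C bs)) ?subsetDl.
- by rewrite cardsU1 addnC leq_add // (leq_trans (leq_b1 _)) // card_gt0; case/andP: cand.
- by apply: leq_trans (leq_card_setU _ _) _; rewrite mulnDl leq_add.
move=> p; rewrite !inE => /orP [/eqP ->|pP]; last by rewrite subsetU ?PQset.
by apply/subsetP => q qQ; rewrite inE orbC inE qQ; case: (q \in C).
Qed.

Lemma greedy_inv_reach B' R' C :
  greedy_reach (set0, set0, set0) (B', R', C) -> greedy_inv (B', R', C).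
Proof. exact: greedy_reach_inv greedy_inv_step greedy_inv0. Qed.

Variable mb : nat.
Hypotheses (mb_gt0 : (0 < mb)%N) (cs_gt0 : 0 < cs) (cr_gt0 : 0 < cr).
Hypothesis relay_price : cr * h.-1%:R <= cs / (mb * mb.+1)%:R.

Lemma greedy_cost_le B' R' C :
  greedy_inv (B', R', C) ->
  cost cs cr B' R' <= cs * (#|B'|%:R + #|Q|%:R / (mb * mb.+1)%:R).
Proof.
case=> CQ _ R'C _; rewrite /cost mulrDr lerD2l.
have R'Q : (#|R'| <= #|Q| * h.-1)%N.
  by apply: leq_trans R'C _; rewrite leq_mul2r subset_leq_card ?orbT.
apply: le_trans (_ : cr * (#|Q| * h.-1)%:R <= _).
  by rewrite ler_wpM2l ?ler_nat // ltW.
by rewrite natrM mulrCA [X in _ <= X]mulrCA ler_wpM2l.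
Qed.

Lemma greedy_ratio_many_sinks B' R' C :
  greedy_reach (set0, set0, set0) (B', R', C) ->
  cost cs cr B' R' <= ratio_bound #|Q| mb * (cs * 2).
Proof.
move=> /greedy_inv_reach inv; apply: le_trans (greedy_cost_le inv) _.
have B'Q : (#|B'| <= #|Q|)%N.
  by case: inv => CQ B'C _ _; apply: leq_trans B'C (subset_leq_card CQ).
rewrite mulrCA ler_wpM2l ?(ltW cs_gt0) //.
by apply: le_trans (ratio_bound_ge_pair _ mb_gt0); rewrite lerD2r ler_nat.
Qed.

Variable bstar : V.
Hypotheses (bstar_sink : bstar \in B) (bstar_serves_Q : Q \subset Qset e h Q bstar).

Lemma Qj_bstar C : Qj e h Q C bstar = Q :\: C.
Proof.
congr (_ :\: _); apply/eqP; rewrite eqEsubset bstar_serves_Q andbT.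
by apply/subsetP => q; rewrite inE => /andP [].
Qed.

Lemma bstar_candidate P Sr C :
  greedy_inv (P, Sr, C) -> ~~ (Q \subset C) -> candidate e h Q B P C bstar.
Proof.
case=> _ _ _ PQset QNC; rewrite /candidate Qj_bstar setD_eq0 QNC andbT !inE bstar_sink andbT.
by apply: contra QNC => /PQset; apply: subset_trans.
Qed.

Lemma greedy_step_progress P Sr C P' Sr' C' :
  greedy_inv (P, Sr, C) -> greedy_step (P, Sr, C) (P', Sr', C') ->
  [/\ ~~ (Q \subset C), (#|P'| <= #|P|.+1)%N & Q \subset C' \/ (#|C| + mb < #|C'|)%N].
Proof.
move=> inv [rho [bs [valid cand cheapest [-> _ ->]]]].
set T := Qj e h Q C bs.
have T_gt0 : (0 < #|T|)%N by rewrite card_gt0; case/andP: cand.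
have QNC : ~~ (Q \subset C).
  rewrite -setD_eq0 -card_gt0; apply: leq_trans T_gt0 _.
  exact/subset_leq_card/Qj_sub.
split=> //; first by rewrite cardsU1 -add1n leq_add2r leq_b1.
have bcand := bstar_candidate inv QNC.
have relays : (#|rho bstar :\: Sr| <= #|Q :\: C| * h.-1)%N.
  apply: leq_trans (subset_leq_card (subsetDl _ _)) _; rewrite -(Qj_bstar C).
  exact: card_valid_relays (sink_notin_Rset bstar_sink) (valid _ bcand).
have [covers|many] : (#|Q :\: C| <= #|T|)%N \/ (mb < #|T|)%N.
  case: (cheapest _ bcand) => [|[_]]; rewrite /Ccost -/T Qj_bstar; last by left.
  apply: cheaper_pick_covers_enough relays => //.
- left; have /eqP -> : T == Q :\: C by rewrite eqEcard Qj_sub.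
  by apply/subsetP => q qQ; rewrite !inE qQ andbT orbN.
- by right; rewrite card_setU_Qj -/T ltn_add2l.
Qed.

Definition single_sink_inv (st : gstate V) : Prop :=
  let: (P, _, C) := st in
  (mb.+1 * #|P| <= #|C|)%N \/ (Q \subset C /\ (mb.+1 * #|P| < #|Q| + mb.+1)%N).

Lemma single_sink_inv_step st st' :
  greedy_inv st /\ single_sink_inv st -> greedy_step st st' ->
  greedy_inv st' /\ single_sink_inv st'.
Proof.
case: st st' => [[P Sr] C] [[P' Sr'] C'] [inv sinv] step.
have inv' := greedy_inv_step inv step; split=> //.
have [QNC P'P progress] := greedy_step_progress inv step.
have {sinv} PC : (mb.+1 * #|P| <= #|C|)%N.
  by case: sinv => // -[QC _]; rewrite QC in QNC.
have CQ : (#|C| < #|Q|)%N.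
  by case: inv => CQ _ _ _; apply: proper_card; rewrite properE CQ.
have P'mb : (mb.+1 * #|P'| <= mb.+1 * #|P| + mb.+1)%N.
  by rewrite addnC -mulnS leq_mul2l P'P orbT.
case: progress => [QC'|many]; [right; split=> // | left]; lia.
Qed.

Lemma single_sink_greedy_card B' R' C :
  greedy_reach (set0, set0, set0) (B', R', C) -> (mb.+1 * #|B'| < #|Q| + mb.+1)%N.
Proof.
move=> reach.
have [[CQ _ _ _] sinv] : greedy_inv (B', R', C) /\ single_sink_inv (B', R', C).
  apply: greedy_reach_inv single_sink_inv_step _ reach.
  by split; [exact: greedy_inv0 | left; rewrite !cards0 muln0].
case: sinv => [B'C|[_ //]]; have := subset_leq_card CQ; lia.
Qed.

Lemma greedy_ratio_single_sink B' R' C :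
  greedy_reach (set0, set0, set0) (B', R', C) -> cost cs cr B' R' <= ratio_bound #|Q| mb * cs.
Proof.
move=> reach; apply: le_trans (greedy_cost_le (greedy_inv_reach reach)) _. rewrite [X in _ <= X]mulrC ler_wpM2l ?(ltW cs_gt0) //.
apply: le_trans (ratio_bound_ge_single _ mb_gt0); rewrite lerD2r.
exact/card_le_ceil_div/single_sink_greedy_card/reach.
Qed.

End GreedyAnalysis.

Theorem theorem2 (K : archiRealFieldType) (V : finType) (e : rel V)
    (Q R B : {set V}) (h : nat) (cs cr : K) (mb : nat) :
  symmetric e -> irreflexive e ->
  [disjoint Q & R] -> [disjoint Q & B] -> [disjoint R & B] ->
  Q :|: R :|: B = [set: V] ->
  (0 < h)%N -> 0 < cs -> 0 < cr ->
  (1 <= mb)%N -> (mb < #|Q|)%N ->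
  cs / cr >= (mb * mb.+1 * h.-1)%:R ->
  feasible_instance e h Q R B ->
  forall B' R', smartselect_output e h cs cr Q R B B' R' ->
  forall Bo Ro, feasible_sol e h Q R B Bo Ro ->
    cost cs cr B' R' <= ratio_bound #|Q| mb * cost cs cr Bo Ro.
Proof.
move=> _ _ _ _ disjRB _ _ cs0 cr0 mb0 mbQ price _ B' R' out Bo Ro [BoB _ Bo_serves].
set r := ratio_bound #|Q| mb.
have relay_price : cr * h.-1%:R <= cs / (mb * mb.+1)%:R.
  rewrite ler_pdivlMr ?ltr0n ?muln_gt0 ?mb0 //.
  by move: price; rewrite ler_pdivlMr // !natrM; lra.
have [q0 q0Q] : exists q, q \in Q by apply/set0Pn; rewrite -card_gt0; lia.
have Bo_gt0 : (0 < #|Bo|)%N.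
  by case: (Bo_serves _ q0Q) => b bBo _; rewrite card_gt0; apply/set0Pn; exists b.
have r1 : 1 <= r by apply: ratio_bound_ge1; lia.
suff : cost cs cr B' R' <= r * (cs * #|Bo|%:R).
  by move/le_trans; apply; rewrite ler_wpM2l ?(le_trans ler01 r1) // lerDl mulr_ge0 // ltW.
case: out => [[b [_ [-> ->]]] | [_ _ [C [reach _]]]].
  rewrite /cost cards1 cards0 mulr0 addr0 mulr1 -[X in X <= _]mul1r.
  by apply: ler_pM r1 _; rewrite ?ler01 ?ler_peMr ?ler1n // ltW.
have [Bo2|Bo1] := leqP 2 #|Bo|.
  apply: le_trans (greedy_ratio_many_sinks disjRB mb0 cs0 cr0 relay_price reach) _.
  by rewrite ler_wpM2l ?(le_trans ler01 r1) // ler_wpM2l ?(ltW cs0) // ler_nat.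
have /cards1P [bstar Bo_bstar] : #|Bo| == 1%N by rewrite eqn_leq Bo_gt0 -ltnS Bo1.
rewrite Bo_bstar cards1 mulr1 in Bo_serves BoB *.
have bstarB : bstar \in B by rewrite (subsetP BoB) ?set11.
exact: (greedy_ratio_single_sink (Q := Q) disjRB mb0 cs0 cr0 relay_price bstarB
          (Qset_sole_sink Bo_serves) reach).
Qed.
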